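(* In the setting below, let $f_1,\dots,f_n$ be $x$-monomials $f_i=a_ix_1^{b_{i1}}\cdots x_n^{b_{in}}$ with $a_i\in K_w[\mathcal G]$ nonzero and $\det(b_{ij})\ne0$, and let $\Phi(\mathbf x)=\sum_{\mathbf k}\phi_{\mathbf k}\mathbf x^{\mathbf k}\in K_w^{\mathbf f}[\mathcal G\oplus\mathcal H]$. Then $\Phi(f_1,\dots,f_n)$ exists in $K_w[\mathcal G\oplus\mathcal H]$ and $$\mathop{\mathrm{CT}}_{\mathbf x}\Phi(f_1,\dots,f_n)=\mathop{\mathrm{CT}}_{f_1,\dots,f_n}\Phi(f_1,\dots,f_n)=\phi_{\mathbf 0}.$$
   Context: $K$ a field; $\mathcal G\oplus\mathcal H$ a totally ordered abelian group (translation-invariant total order) with $\mathcal H\cong\mathbb Z^n$ with basis $e_1,\dots,e_n$, $x_i=t^{e_i}$; $K_w[\cdot]$ denotes Malcev–Neumann series (formal series with well-ordered support); elements of $K_w[\mathcal G\oplus\mathcal H]$ are written $\sum_{\mathbf k}b_{\mathbf k}\mathbf x^{\mathbf k}$, $b_{\mathbf k}\in K_w[\mathcal G]$, and $\mathop{\mathrm{CT}}_{\mathbf x}$ extracts $b_{\mathbf 0}$. An $x$-monomial is a series with exactly one nonzero term $b_{\mathbf k}\mathbf x^{\mathbf k}$. If the initial (least-order) term of $f_i$ is $c_it^{g_i}\mathbf x^{\mathbf b_i}$ ($c_i\in K$, $g_i\in\mathcal G$), $\mathbf f$ denotes the injective endomorphism of $\mathcal G\oplus\mathcal H$ fixing $\mathcal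 G$ with $e_i\mapsto g_i+\sum_jb_{ij}e_j$, and $K_w^{\mathbf f}[\mathcal G\oplus\mathcal H]$ is the field of formal series whose support is well-ordered for the order $a\le^{\mathbf f}b\iff\mathbf f(a)\le\mathbf f(b)$. $\mathop{\mathrm{CT}}_{f_1,\dots,f_n}\Phi(f_1,\dots,f_n)$ denotes the coefficient $\phi_{\mathbf 0}$ of $\Phi(\mathbf x)$ viewed in $K_w^{\mathbf f}[\mathcal G\oplus\mathcal H]$; $\Phi(f_1,\dots,f_n)=\sum_{\mathbf k}\phi_{\mathbf k}f_1^{k_1}\cdots f_n^{k_n}$. *)

(* Malcev–Neumann series are modelled as coefficient functions
   Γ -> K on Γ = G ⊕ Z^n, encoded as G * 'rV[int]_n, with well-ordered support. *)
From HB Require Import structures.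
From mathcomp Require Import all_boot all_order all_algebra.
Set Implicit Arguments. Unset Strict Implicit. Unset Printing Implicit Defensive.
Import Order.TTheory GRing.Theory Num.Theory.
Local Open Scope ring_scope.

Definition wellordered (T : Type) (le : rel T) (A : T -> Prop) : Prop :=
  forall B : T -> Prop, (forall x, B x -> A x) -> (exists x, B x) ->
    exists m, B m /\ forall y, B y -> le m y.

Definition supp (T : Type) (K : nzRingType) (s : T -> K) : T -> Prop :=
  fun t => s t != 0.

Definition sums (I : eqType) (T : Type) (K : nzRingType)
  (F : I -> T -> K) (S : T -> K) : Prop :=
  forall t, exists s : seq I, [/\ uniq s, (forall i, F i t != 0 -> i \in s)
                                 & S t = \sum_(i <- s) F i t].

Definition mulser (G : zmodType) (K : nzRingType) (a b c : G -> K) : Prop :=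
  sums (fun h g => a h * b (g - h)) c.

Definition oneser (G : zmodType) (K : nzRingType) : G -> K :=
  fun g => if g == 0 then 1 else 0.

Definition leG (G : zmodType) (n : nat) (le : rel (G * 'rV[int]_n)) : rel G :=
  fun g h => le (g, 0) (h, 0).

Definition tot_ord_group (G : zmodType) (n : nat) (le : rel (G * 'rV[int]_n)) : Prop :=
  [/\ (forall x y, le x y -> le y x -> x = y),
      (forall x y z, le x y -> le y z -> le x z),
      (forall x y, le x y || le y x)
    & (forall x y z, le x y -> le (x.1 + z.1, x.2 + z.2) (y.1 + z.1, y.2 + z.2))].

Definition evec (n : nat) (i : 'I_n) : 'rV[int]_n := delta_mx 0 i.

(* P k = a_1^{k_1} ... a_n^{k_n} in K_w[G] (k in Z^n): P 0 = 1,
   P (k + e_i) = P k * a_i, all P k in K_w[G]. *)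
Definition powfam (G : zmodType) (K : fieldType) (n : nat)
  (le : rel (G * 'rV[int]_n)) (a : 'I_n -> G -> K) (P : 'rV[int]_n -> G -> K) : Prop :=
  [/\ P 0 = @oneser G K,
      (forall k i, mulser (P k) (a i) (P (k + evec i)))
    & (forall k, wellordered (leG le) (supp (P k)))].

Definition fendo (G : zmodType) (n : nat) (gmin : 'I_n -> G) (B : 'M[int]_n)
  (x : G * 'rV[int]_n) : G * 'rV[int]_n :=
  (x.1 + \sum_(i < n) gmin i *~ (x.2 0 i), x.2 *m B).

Definition lef (G : zmodType) (n : nat) (le : rel (G * 'rV[int]_n))
  (gmin : 'I_n -> G) (B : 'M[int]_n) : rel (G * 'rV[int]_n) :=
  fun x y => le (fendo gmin B x) (fendo gmin B y).

(* the term phi_k f^k = (phi_k * P_k) x^{kB} as a series on G ⊕ Z^n,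
   where C k = phi_k * P_k in K_w[G] *)
Definition term (G : zmodType) (K : fieldType) (n : nat) (B : 'M[int]_n)
  (C : 'rV[int]_n -> G -> K) (k : 'rV[int]_n) : G * 'rV[int]_n -> K :=
  fun x => if x.2 == k *m B then C k x.1 else 0.

(* Each a_i factors as c_i t^(g_i) (1 - u_i) with u_i supported on strictly
   positive exponents.  By Neumann's lemma the monoid <A> generated by the
   exponents A of all the u_i is well-ordered and every element of it is a sum
   of elements of A of boundedly many lengths, so sum_m u_i^m makes sense and
   K_w[G] is a field.  Any family P with P_{k+e_i} = P_k a_i is then the family
   of powers a^k, whose support lies in (sum_i k_i g_i) + <A>.  Hence the terms
   phi_k a^k x^(kB) have their supports in f(supp Phi) + (<A> x 0), a sum of two
   well-ordered sets, and since B is injective the x-exponent 0 only comes from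
   k = 0, where a^0 = 1. *)

From HB Require Import structures.
From mathcomp Require Import all_boot all_order all_algebra.
From mathcomp Require Import boolp classical_sets fsbigop.
Set Implicit Arguments. Unset Strict Implicit. Unset Printing Implicit Defensive.
Import Order.TTheory GRing.Theory Num.Theory.
Local Open Scope classical_set_scope.
Local Open Scope ring_scope.

(** * Ordered abelian groups and well-ordered subsets *)

Lemma wellordered_sub (T : Type) (L : rel T) (A B : set T) :
  wellordered L A -> B `<=` A -> wellordered L B.
Proof. by move=> woA BA C CB; apply: woA => x /CB /BA. Qed.

Lemma wellordered_image (T U : Type) (L : rel U) (f : T -> U) (A : set T) :
  wellordered (fun x y => L (f x) (f y)) A -> wellordered L (f @` A).
Proof.
move=> woA C CfA [z Cz]; have [x Ax ez] := CfA _ Cz; subst z.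
have [m [[Am Cfm] minm]] :=
  woA [set x | A x /\ C (f x)] (fun x h => proj1 h) (ex_intro _ x (conj Ax Cz)).
exists (f m); split => // w Cw; have [y Ay ew] := CfA _ Cw; subst w; exact: minm.
Qed.

Definition seq_cover (T : eqType) (S : set T) (s : seq T) :=
  uniq s /\ forall x, S x -> x \in s.

Section OrderedZmod.
Variables (T : zmodType) (L : rel T).

Definition ordered_zmod := [/\ (forall x y, L x y -> L y x -> x = y),
  (forall x y z, L x y -> L y z -> L x z), (forall x y, L x y || L y x)
  & (forall x y z, L x y -> L (x + z) (y + z))].

Definition strict x y := ~~ L y x.

Hypothesis HL : ordered_zmod.

Lemma oz_anti x y : L x y -> L y x -> x = y.
Proof. by case: HL => h _ _ _; apply: h. Qed.
Lemma oz_trans x y z : L x y -> L y z -> L x z.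
Proof. by case: HL => _ h _ _; apply: h. Qed.
Lemma oz_total x y : L x y || L y x.
Proof. by case: HL => _ _ h _; apply: h. Qed.
Lemma oz_refl x : L x x.
Proof. by move: (oz_total x x); rewrite orbb. Qed.

Lemma oz_leD2r z x y : L (x + z) (y + z) = L x y.
Proof.
have add w a b : L a b -> L (a + w) (b + w) by case: HL => _ _ _; apply.
by apply/idP/idP => [/(add (- z))|]; rewrite ?addrK //; apply: add.
Qed.
Lemma oz_leD2l z x y : L (z + x) (z + y) = L x y.
Proof. by rewrite ![z + _]addrC oz_leD2r. Qed.
Lemma oz_ltD2r z x y : strict (x + z) (y + z) = strict x y.
Proof. by rewrite /strict oz_leD2r. Qed.
Lemma oz_ltD2l z x y : strict (z + x) (z + y) = strict x y.
Proof. by rewrite /strict oz_leD2l. Qed.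
Lemma oz_leD x y z t : L x y -> L z t -> L (x + z) (y + t).
Proof.
by move=> lxy lzt; apply: (@oz_trans _ (y + z)); rewrite ?oz_leD2r ?oz_leD2l.
Qed.
Lemma oz_leN2 x y : L (- x) (- y) = L y x.
Proof. by rewrite -(oz_leD2r (x + y)) addKr [x + y]addrC addKr. Qed.

Lemma oz_ltW x y : strict x y -> L x y.
Proof. by rewrite /strict; have := oz_total x y; case: (L x y) => //= ->. Qed.
Lemma oz_lt_le_trans x y z : strict x y -> L y z -> strict x z.
Proof. by move=> /negP lxy lyz; apply/negP => lzx; apply: lxy; apply: oz_trans lzx. Qed.
Lemma oz_le_lt_trans x y z : L x y -> strict y z -> strict x z.
Proof. by move=> lxy /negP lyz; apply/negP => lzx; apply: lyz; apply: oz_trans lxy. Qed.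
Lemma oz_lt_trans x y z : strict x y -> strict y z -> strict x z.
Proof. by move=> /oz_ltW; apply: oz_le_lt_trans. Qed.
Lemma oz_le_eqVlt x y : L x y -> x = y \/ strict x y.
Proof. by move=> lxy; case: (boolP (L y x)) => lyx; [left; apply: oz_anti|right]. Qed.

Local Notation wo := (wellordered L).

Lemma wellorderedU (A B : set T) : wo A -> wo B -> wo (A `|` B).
Proof.
move=> woA woB C CAB [x Cx].
have minI (D : set T) : wo D -> (exists y, C y /\ D y) ->
    exists2 m, C m & forall y, C y -> D y -> L m y.
  move=> woD /(woD [set y | C y /\ D y] (fun _ h => proj2 h)) [m [[Cm _] minm]].
  by exists m => // y Cy Dy; apply: minm.
have [CA|nCA] := pselect (exists y, C y /\ A y);
  have [CB|nCB] := pselect (exists y, C y /\ B y).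
- have [a Ca mina] := minI _ woA CA; have [b Cb minb] := minI _ woB CB.
  have [lab|lba] := orP (oz_total a b).
  + exists a; split => // y Cy; case: (CAB _ Cy) => [Ay|By]; first exact: mina.
    exact: oz_trans lab (minb _ Cy By).
  + exists b; split => // y Cy; case: (CAB _ Cy) => [Ay|By]; last exact: minb.
    exact: oz_trans lba (mina _ Cy Ay).
- have [a Ca mina] := minI _ woA CA.
  exists a; split => // y Cy; case: (CAB _ Cy) => [Ay|By]; first exact: mina.
  by case: nCB; exists y.
- have [b Cb minb] := minI _ woB CB.
  exists b; split => // y Cy; case: (CAB _ Cy) => [Ay|By]; last exact: minb.
  by case: nCA; exists y.
- by case: (CAB _ Cx) => [Ax|Bx]; [case: nCA|case: nCB]; exists x.
Qed.

Lemma wellordered_shift (A : set T) c : wo A -> wo [set y | A (y + c)].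
Proof.
move=> woA C CA [x Cx].
have [_ [[y Cy <-] miny]] := woA [set y + c | y in C] (fun _ '(ex_intro2 y Cy e) =>
  eq_ind _ A (CA _ Cy) _ e) (ex_intro _ (x + c) (ex_intro2 _ _ x Cx erefl)).
by exists y; split => // z Cz; rewrite -(oz_leD2r c); apply: miny; exists z.
Qed.

Lemma not_wellordered_no_min (A : set T) : ~ wo A ->
  exists2 B : set T, B `<=` A /\ (exists x, B x) &
    forall m, B m -> exists2 y, B y & strict y m.
Proof.
move=> nwoA; apply: contrapT => nB; apply: nwoA => B BA [x Bx].
apply: contrapT => nmin; apply: nB; exists B; first by split; [|exists x].
move=> m Bm; apply: contrapT => nlt; apply: nmin; exists m; split => // y By.
by apply: contrapT => /negP lym; apply: nlt; exists y.
Qed.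

Lemma wellordered_no_desc (A : set T) (s : nat -> T) :
  wo A -> (forall j, A (s j)) -> ~ (forall j, strict (s j.+1) (s j)).
Proof.
move=> woA As desc.
have [_ [[i _ <-] mini]] := woA (range s) (fun _ '(ex_intro2 i _ e) => eq_ind _ A (As i) _ e)
  (ex_intro _ (s 0%N) (ex_intro2 _ _ 0%N I erefl)).
by move/negP: (desc i); apply; apply: mini; exists i.+1.
Qed.

Lemma no_desc_wellordered (A : set T) :
  (forall s : nat -> T, (forall j, A (s j)) -> ~ (forall j, strict (s j.+1) (s j))) ->
  wo A.
Proof.
move=> nodesc; apply: contrapT => /not_wellordered_no_min [B [BA [x Bx]] nomin].
have /choice [next nextP] : forall y, exists z, B y -> B z /\ strict z y.
  move=> y; have [By|nBy] := pselect (B y); last by exists y.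
  by have [z Bz lt] := nomin y By; exists z.
have Bs j : B (iter j next x) by elim: j => // j IH; exact: (nextP _ IH).1.
apply: (nodesc (fun j => iter j next x)) => j; first exact/BA/Bs.
exact: (nextP _ (Bs j)).2.
Qed.

Lemma nondecreasing_subseq (A : set T) (s : nat -> T) : wo A -> (forall j, A (s j)) ->
  exists phi : nat -> nat,
    (forall t, (phi t < phi t.+1)%N) /\ (forall t, L (s (phi t)) (s (phi t.+1))).
Proof.
move=> woA As.
have /choice [g gP] j : exists i, (j <= i)%N /\ forall i', (j <= i')%N -> L (s i) (s i').
  have [_ [[i ji <-] mini]] := woA [set s i | i in [set i | (j <= i)%N]]
    (fun _ '(ex_intro2 i _ e) => eq_ind _ A (As i) _ e)
    (ex_intro _ (s j) (ex_intro2 _ _ j (leqnn j) erefl)).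
  by exists i; split => // i' ji'; apply: mini; exists i'.
pose phi t := iter t (fun j => g j.+1) (g 0%N).
have phiS t : phi t.+1 = g (phi t).+1 by [].
exists phi; split => t; first by rewrite phiS; case: (gP (phi t).+1).
have [j [ej jphi]] : exists j, phi t = g j /\ (j <= phi t)%N.
  case: t => [|t]; first by exists 0%N.
  by exists (phi t).+1; rewrite phiS; split => //; case: (gP (phi t).+1).
rewrite ej; apply: (gP j).2; rewrite phiS.
by apply: (leq_trans jphi); apply: (leq_trans (leqnSn _)); case: (gP (phi t).+1).
Qed.

Lemma wellordered_sumset (A B : set T) : wo A -> wo B -> wo [set a + b | a in A & b in B].
Proof.
move=> woA woB; apply: no_desc_wellordered => s ABs desc.
have /choice [p pP] j : exists p : T * T, [/\ A p.1, B p.2 & s j = p.1 + p.2].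
  by have [a Aa [b Bb <-]] := ABs j; exists (a, b).
have pA j : A (p j).1 by case: (pP j).
have [phi [phi_inc phi_nd]] := nondecreasing_subseq woA pA.
apply: (wellordered_no_desc woB (s := fun t => (p (phi t)).2)) => [t|t].
  by case: (pP (phi t)).
apply/negP => le_b.
have /negP := homo_ltn (r := fun x y => strict y x)
  (fun y x z lyx lzy => oz_lt_trans lzy lyx) desc (phi_inc t).
apply; case: (pP (phi t)) => _ _ ->; case: (pP (phi t.+1)) => _ _ ->.
exact: oz_leD (phi_nd t) le_b.
Qed.

Lemma bi_wellordered_finite (S : set T) :
  wo S -> wellordered (fun x y => L y x) S -> exists s, seq_cover S s.
Proof.
move=> woS woS'.
pose below a := [set b | S b /\ L b a].
have below_fin a : S a -> exists s, seq_cover (below a) s.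
  move=> Sa; apply: contrapT => nfin.
  have [c [[Sc nfinc] minc]] := woS [set a | S a /\ ~ exists s, seq_cover (below a) s]
    (fun _ h => proj1 h) (ex_intro _ a (conj Sa nfin)).
  apply: nfinc; have [[d [Sd ltdc maxd]]|nlt] :=
    pselect (exists d, [/\ S d, strict d c & forall b, S b -> strict b c -> L b d]).
  - have [s [us covs]] : exists s, seq_cover (below d) s.
      by apply: contrapT => nfind; move/negP: ltdc; apply; apply: minc.
    exists (undup (c :: s)); split => [|b [Sb lbc]]; first exact: undup_uniq.
    rewrite mem_undup in_cons; have [->|ltbc] := oz_le_eqVlt lbc; first by rewrite eqxx.
    by rewrite covs ?orbT //; split => //; apply: maxd.
  - exists [:: c]; split => // b [Sb lbc]; rewrite /= inE.
    have [->|ltbc] := oz_le_eqVlt lbc; first by rewrite eqxx.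
    case: nlt; have [d [[Sd ltdc] maxd]] := woS' [set b | S b /\ strict b c]
      (fun _ h => proj1 h) (ex_intro _ b (conj Sb ltbc)).
    by exists d; split => // b' Sb' ltb'c; apply: maxd.
have [[x Sx]|nS] := pselect (exists x, S x); last first.
  by exists [::]; split => // x Sx; case: nS; exists x.
have [e [Se maxe]] := woS' S (fun _ h => h) (ex_intro _ x Sx).
have [s [us covs]] := below_fin e Se.
by exists s; split => // y Sy; apply: covs; split => //; apply: maxe.
Qed.

Lemma antidiagonal_finite (A B : set T) x :
  wo A -> wo B -> exists s, seq_cover [set a | A a /\ B (x - a)] s.
Proof.
move=> woA woB; apply: bi_wellordered_finite.
  by apply: (wellordered_sub woA) => a [].
move=> C CAB [c Cc].
have [_ [[a Ca <-] mina]] := woB [set x - a | a in C]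
  (fun _ '(ex_intro2 a Ca e) => eq_ind _ B (CAB _ Ca).2 _ e)
  (ex_intro _ (x - c) (ex_intro2 _ _ c Cc erefl)).
by exists a; split => // y Cy; rewrite -oz_leN2 -(oz_leD2l x); apply: mina; exists y.
Qed.

Lemma minimal_descending_seq (P : set T) (size : nat -> set T) :
  (exists x, P x) -> (forall x, P x -> exists2 y, P y & strict y x) ->
  (forall x, P x -> exists m, size m x) ->
  exists x : nat -> T * nat, forall j, [/\ P (x j).1, size (x j).2 (x j).1,
    strict (x j.+1).1 (x j).1 &
    forall y m, P y -> size m y -> (if j is i.+1 then strict y (x i).1 else true) ->
      ((x j).2 <= m)%N].
Proof.
move=> [x0 Px0] P_step P_size.
pose below (o : option T) y := if o is Some p then strict y p else true.
pose step o (ym : T * nat) := [/\ P ym.1, below o ym.1, size ym.2 ym.1 &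
  forall y m, P y -> below o y -> size m y -> (ym.2 <= m)%N].
have stepP o : (exists2 y, P y & below o y) -> exists ym, step o ym.
  move=> [y Py yb]; have [m0 sm0] := P_size y Py.
  have exm : exists m, `[< exists y, [/\ P y, below o y & size m y] >].
    by exists m0; apply/asboolP; exists y.
  case: (ex_minnP exm) => m /asboolP [y1 [Py1 y1b sm]] minm.
  by exists (y1, m); split => // z k Pz zb sk; apply: minm; apply/asboolP; exists z.
pose next o := xget (x0, 0%N) (step o).
pose x := fix x j := next (if j is i.+1 then Some (x i).1 else None).
pose prev j := if j is i.+1 then Some (x i).1 else None.
have xP j : step (prev j) (x j).
  elim: j => [|j IH]; apply: xgetPex; apply: stepP; first by exists x0.
  by case: IH => Pxj _ _ _; have [y Py lty] := P_step _ Pxj; exists y.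
exists x => j; have [Pxj _ sxj minj] := xP j; have [_ ltj _ _] := xP j.+1.
by split => // y m Py sy yb; apply: (minj y) => //; case: j {Pxj sxj ltj minj} yb.
Qed.

(** * Neumann's lemma *)

Fixpoint nsum (A : set T) (m : nat) : set T :=
  if m is m'.+1 then [set a + y | a in A & y in nsum A m'] else [set 0].

Definition monoid_gen (A : set T) := [set x | exists m, nsum A m x].

Lemma not_wellordered_below (X B : set T) x : B `<=` X ->
  (forall m, B m -> exists2 y, B y & strict y m) -> B x -> ~ wo [set y | X y /\ L y x].
Proof.
move=> BX nomin Bx woX.
have [m [[Bm lmx] minm]] := woX [set y | B y /\ L y x]
  (fun y h => conj (BX _ h.1) h.2) (ex_intro _ x (conj Bx (oz_refl x))).
have [y By lym] := nomin m Bm; have lyx := oz_trans (oz_ltW lym) lmx.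
by move/negP: lym; apply; apply: minm.
Qed.

Lemma monoid_gen_sub (A B : set T) : A `<=` B -> monoid_gen A `<=` monoid_gen B.
Proof.
move=> AB x [m]; elim: m x => [|m IH] x /=; first by exists 0%N.
by move=> [a Aa [y /IH [k ky] <-]]; exists k.+1; exists a; [apply: AB|exists y].
Qed.

Lemma monoid_genD (A : set T) x y :
  monoid_gen A x -> monoid_gen A y -> monoid_gen A (x + y).
Proof.
move=> [m]; elim: m x => [|m IH] x /=; first by move=> ->; rewrite add0r.
move=> [a Aa [z /IH zy <-]] /zy [k azy]; exists k.+1; exists a => //.
by exists (z + y); rewrite ?addrA.
Qed.

Section Neumann.
Variable A : set T.
Hypotheses (A_gt0 : forall a, A a -> strict 0 a) (woA : wo A).

Lemma nsum_ge0 m x : nsum A m x -> L 0 x.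
Proof.
elim: m x => [|m IH] x /=; first by move=> ->; exact: oz_refl.
move=> [a Aa [y my <-]]; rewrite -[0]addr0.
exact: oz_leD (oz_ltW (A_gt0 Aa)) (IH _ my).
Qed.

Let bad x := monoid_gen A x /\ ~ wo [set y | monoid_gen A y /\ L y x].

Let bad_step x : bad x -> exists2 y, bad y & strict y x.
Proof.
move=> [gx /not_wellordered_no_min [B [BX [y0 By0]] nomin]].
have [y1 By1 lt10] := nomin _ By0.
exists y1; last exact: oz_lt_le_trans lt10 (BX _ By0).2.
split; first exact: (BX _ By1).1.
by apply: (not_wellordered_below (B := B)) => // y /BX [].
Qed.

Let bad_neq0 x : bad x -> x != 0.
Proof.
move=> [_ nwo]; apply/eqP => x0; apply: nwo; rewrite x0 => C C0 [c Cc].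
have C_0 z : C z -> z = 0 by move=> /C0 [[m /nsum_ge0 l0z] lz0]; apply: oz_anti.
by exists c; split => // y /C_0 ->; rewrite (C_0 _ Cc) oz_refl.
Qed.

Theorem wellordered_monoid_gen : wo (monoid_gen A).
Proof.
apply: contrapT => nwo.
have [x0 bad_x0] : exists x, bad x.
  have [B [BX [x Bx]] nomin] := not_wellordered_no_min nwo.
  by exists x; split; [exact: BX|apply: (not_wellordered_below (B := B))].
have [x xP] := minimal_descending_seq (ex_intro _ x0 bad_x0) bad_step (fun x h => h.1).
have m_gt0 j : (0 < (x j).2)%N.
  case: (xP j) => /bad_neq0 + sj _ _; move: sj; case: (x j).2 => //= ->.
  by rewrite eqxx.
(* x_j = a_j + z_j with z_j shorter than x_j; along a subsequence on which
   the a_j do not decrease, the z_j decrease, so z_(phi 0) is bad and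
   contradicts the minimality of the length of x_(phi 0). *)
have /choice [p pP] j : exists p : T * T,
    [/\ A p.1, nsum A (x j).2.-1 p.2 & (x j).1 = p.1 + p.2].
  case: (xP j) => _ + _ _; move: (m_gt0 j); case: (x j).2 => //= m _ [a Aa [y my <-]].
  by exists (a, y).
have pA j : A (p j).1 by case: (pP j).
have [phi [phi_inc phi_nd]] := nondecreasing_subseq woA pA.
have x_desc : {homo (fun j => (x j).1) : i j / (i < j)%N >-> strict j i}.
  apply: homo_ltn => [y z t lzy ltz|j]; first exact: oz_lt_trans ltz lzy.
  by case: (xP j).
have z_desc t : strict (p (phi t.+1)).2 (p (phi t)).2.
  apply/negP => le_z; move/negP: (x_desc _ _ (phi_inc t)); apply.
  case: (pP (phi t)) => _ _ ->; case: (pP (phi t.+1)) => _ _ ->.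
  exact: oz_leD (phi_nd t) le_z.
have gen_z t : monoid_gen A (p (phi t)).2 by exists (x (phi t)).2.-1; case: (pP (phi t)).
set w := (p (phi 0%N)).2.
have bad_w : bad w.
  split; first exact: gen_z.
  apply: (not_wellordered_below (B := range (fun t => (p (phi t)).2))).
  - by move=> _ [t _ <-]; exact: gen_z.
  - by move=> _ [t _ <-]; exists (p (phi t.+1)).2; [exists t.+1|exact: z_desc].
  - by exists 0%N.
have w_lt : strict w (x (phi 0%N)).1.
  by case: (pP (phi 0%N)) => Aa _ ->; rewrite -{1}(add0r w) oz_ltD2r; exact: A_gt0.
have w_below : is_true (if phi 0%N is i.+1 then strict w (x i).1 else true).
  case E: (phi 0%N) => [|i] //; rewrite E in w_lt.
  by apply: oz_lt_trans w_lt _; case: (xP i).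
have [_ mw _] := pP (phi 0%N); have [_ _ _ /(_ w _ bad_w mw w_below)] := xP (phi 0%N).
by rewrite leqNgt ltn_predL m_gt0.
Qed.

Lemma nsum_bounded x : exists N, forall m, nsum A m x -> (m < N)%N.
Proof.
apply: contrapT => nb.
pose unbounded y := forall N, exists2 m, (N <= m)%N & nsum A m y.
have ub_x : unbounded x.
  move=> N; apply: contrapT => nm; apply: nb; exists N => m mx.
  by rewrite ltnNge; apply/negP => Nm; apply: nm; exists m.
(* Below a least x0 with unbounded lengths every x0 - a is bounded, and only
   finitely many a can be split off x0. *)
have [x0 [ub0 min0]] := wellordered_monoid_gen (B := unbounded)
  (fun y h => let: ex_intro2 m _ my := h 0%N in ex_intro _ m my) (ex_intro _ x ub_x).
have [s [us covs]] := antidiagonal_finite x0 woA wellordered_monoid_gen.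
have /choice [N NP] a : exists N, A a -> forall m, nsum A m (x0 - a) -> (m < N)%N.
  have [Aa|] := pselect (A a); last by exists 0%N.
  apply: contrapT => nN; have /min0 : unbounded (x0 - a).
    move=> N; apply: contrapT => nm; apply: nN; exists N => _ m ma.
    by rewrite ltnNge; apply/negP => Nm; apply: nm; exists m.
  apply/negP; rewrite -{1}(subr0 x0) -/(strict _ _) oz_ltD2l /strict oz_leN2.
  exact: A_gt0.
have [m Nm mx0] := ub0 (\max_(a <- s) N a).+1.
case: m Nm mx0 => // m Nm [a Aa [y my ey]].
have ya : y = x0 - a by rewrite -ey addrC addKr.
have sa : a \in s by apply: covs; split => //; rewrite -ya; exists m.
move: (NP a Aa m); rewrite -ya => /(_ my); apply/negP; rewrite -leqNgt.
exact: leq_trans (leq_bigmax_seq _ sa isT) Nm.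
Qed.

End Neumann.
End OrderedZmod.

(** * The field of Malcev-Neumann series *)

Lemma fsum_seq (T : choiceType) (K : nmodType) (F : T -> K) (s : seq T) :
  uniq s -> (forall h, F h != 0 -> h \in s) ->
  \sum_(h \in [set: T]) F h = \sum_(h <- s) F h.
Proof.
move=> us covs; rewrite (fsbig_seq _ _ us) (fsbig_widen [set` s] setT F) //.
by move=> h [_ nhs]; apply: contra_notP nhs => /eqP /covs.
Qed.

Lemma fsum_exchange (T : choiceType) (K : nmodType) (F : T -> T -> K) (s r : seq T) :
  uniq s -> uniq r -> (forall h u, F h u != 0 -> h \in s /\ u \in r) ->
  \sum_(h \in [set: T]) \sum_(u \in [set: T]) F h u =
  \sum_(u \in [set: T]) \sum_(h \in [set: T]) F h u.
Proof.
move=> us ur covF.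
have inner_h h : \sum_(u \in [set: T]) F h u = \sum_(u <- r) F h u.
  by apply: fsum_seq => // u /covF [].
have inner_u u : \sum_(h \in [set: T]) F h u = \sum_(h <- s) F h u.
  by apply: fsum_seq => // h /covF [].
rewrite (fsum_seq us); last by move=> h /fsbigN1 [u _ /covF []].
rewrite (fsum_seq ur); last first.
  by move=> u /(fsbigN1 (f := fun u h => F h u)) [h _ /covF []].
under eq_bigr do rewrite inner_h; under [RHS]eq_bigr do rewrite inner_u.
exact: exchange_big.
Qed.

Definition conv (T : zmodType) (K : nzRingType) (f g : T -> K) : T -> K :=
  fun x => \sum_(h \in [set: T]) f h * g (x - h).

Section Convolution.
Variables (T : zmodType) (L : rel T) (K : fieldType).
Hypothesis HL : ordered_zmod L.
Local Notation wo := (wellordered L).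
Implicit Types f g k : T -> K.

Lemma conv_cover f g x : wo (supp f) -> wo (supp g) ->
  exists s, uniq s /\ forall h, f h * g (x - h) != 0 -> h \in s.
Proof.
move=> wof wog; have [s [us covs]] := antidiagonal_finite HL x wof wog.
by exists s; split => // h; rewrite mulf_eq0 negb_or => /andP[fh gh]; apply: covs.
Qed.

Lemma mulser_conv f g c : wo (supp f) -> wo (supp g) -> mulser f g c <-> c = conv f g.
Proof.
move=> wof wog; split => [mfg|->].
  by apply: funext => x; have [s [us covs ->]] := mfg x; rewrite /conv (fsum_seq us covs).
move=> x; have [s [us covs]] := conv_cover x wof wog.
by exists s; split => //; apply: fsum_seq.
Qed.

Lemma conv_supp f g x : conv f g x != 0 -> [set a + b | a in supp f & b in supp g] x.
Proof.
move=> /(fsbigN1 (f := fun x h => f h * g (x - h))) [h _].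
rewrite mulf_eq0 negb_or => /andP [fh gh].
by exists h => //; exists (x - h) => //; rewrite addrC subrK.
Qed.

Lemma wellordered_conv f g : wo (supp f) -> wo (supp g) -> wo (supp (conv f g)).
Proof.
move=> wof wog; apply: (wellordered_sub (wellordered_sumset HL wof wog)) => x.
exact: conv_supp.
Qed.

Lemma convC f g : conv f g = conv g f.
Proof.
apply: funext => x; rewrite /conv (reindex_fsbigT (fun h => x - h)) /=.
  by apply: eq_fsbigr => h _; rewrite subKr mulrC.
by exists (fun h => x - h) => h; rewrite subKr.
Qed.

Lemma conv_oneser f : conv (@oneser T K) f = f.
Proof.
apply: funext => x; rewrite /conv (fsum_seq (s := [:: 0])) // => [|h].
  by rewrite big_seq1 /oneser eqxx mul1r subr0.
by rewrite inE /oneser; case: (h =P 0) => //= _; rewrite mul0r eqxx.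
Qed.

Lemma convDl f g k : wo (supp f) -> wo (supp g) -> wo (supp k) ->
  conv (fun x => f x + g x) k = (fun x => conv f k x + conv g k x).
Proof.
move=> wof wog wok; apply: funext => x.
have [s1 [us1 covs1]] := conv_cover x wof wok.
have [s2 [us2 covs2]] := conv_cover x wog wok.
have covs h : h \in s1 \/ h \in s2 -> h \in undup (s1 ++ s2).
  by rewrite mem_undup mem_cat => -[] ->; rewrite ?orbT.
rewrite /conv; under eq_fsbigr do rewrite mulrDl.
rewrite !(fsum_seq (s := undup (s1 ++ s2))) ?undup_uniq -?big_split //.
- by move=> h /covs2 h2; apply: covs; right.
- by move=> h /covs1 h1; apply: covs; left.
move=> h nz; apply: covs.
have [fh|] := eqVneq (f h * k (x - h)) 0; last by move/covs1; left.
by right; apply: covs2; move: nz; rewrite fh add0r.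
Qed.

Lemma convA f g k : wo (supp f) -> wo (supp g) -> wo (supp k) ->
  conv (conv f g) k = conv f (conv g k).
Proof.
move=> wof wog wok; apply: funext => x; rewrite /conv.
have shift u h : x - u - (h - u) = x - h by rewrite opprB addrA subrK.
under eq_fsbigr do rewrite mulr_fsuml.
under [RHS]eq_fsbigr => u _.
  rewrite mulr_fsumr (reindex_fsbigT (fun h => h - u)); last first.
    by exists (fun v => v + u) => v; rewrite ?addrK ?subrK.
  under eq_fsbigr do rewrite shift mulrA.
  over.
have [sh [ush covh]] := antidiagonal_finite HL x (wellordered_sumset HL wof wog) wok.
have [su [usu covu]] := antidiagonal_finite HL x wof (wellordered_sumset HL wog wok).
apply: (fsum_exchange ush usu) => h u.
rewrite !mulf_eq0 !negb_or => /andP [/andP [fu gu] kh]; split; [apply: covh|apply: covu].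
- by split => //; exists u => //; exists (h - u) => //; rewrite addrC subrK.
- by split => //; exists (h - u) => //; exists (x - h) => //; rewrite addrC addrA subrK.
Qed.

End Convolution.

Section SeriesRing.
Variables (T : zmodType) (L : rel T) (K : fieldType).
Local Notation wo := (wellordered L).

Record wseries := WSeries { scoef : T -> K; scoef_wo : wo (supp scoef) }.

(* Indexed by the order axioms, which the ring laws need, so that the
   instances below can be canonical. *)
Definition series (_ : ordered_zmod L) := wseries.

Variable HL : ordered_zmod L.
Local Notation S := (series HL).
HB.instance Definition _ := gen_eqMixin S.
HB.instance Definition _ := gen_choiceMixin S.

Lemma series_eq (f g : S) : scoef f = scoef g -> f = g.
Proof. by case: f g => [f wf] [g wg] /= efg; subst g; congr WSeries; apply: Prop_irrelevance. Qed.

Lemma wellordered_set1 c : wo [set c].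
Proof. by move=> C Cc [x Cx]; exists x; split => // y /Cc ->; rewrite (Cc _ Cx) oz_refl. Qed.

Lemma wellordered_supp0 : wo (supp (fun _ : T => 0 : K)).
Proof. by move=> C C0 [x /C0]; rewrite /supp eqxx. Qed.

Lemma wellordered_suppD (f g : T -> K) :
  wo (supp f) -> wo (supp g) -> wo (supp (fun x => f x + g x)).
Proof.
move=> wof wog; apply: (wellordered_sub (wellorderedU HL wof wog)) => x.
rewrite /supp; have [f0|] := eqVneq (f x) 0; last by left.
by rewrite f0 add0r; right.
Qed.

Lemma wellordered_suppN (f : T -> K) : wo (supp f) -> wo (supp (fun x => - f x)).
Proof. by move=> wof; apply: (wellordered_sub wof) => x; rewrite /supp oppr_eq0. Qed.

Lemma wellordered_supp1 : wo (supp (@oneser T K)).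
Proof.
apply: (wellordered_sub (@wellordered_set1 0)) => x; rewrite /supp /oneser.
by case: (x =P 0) => //= _; rewrite eqxx.
Qed.

Definition series0 : S := WSeries wellordered_supp0.
Definition seriesD (f g : S) : S := WSeries (wellordered_suppD (@scoef_wo f) (@scoef_wo g)).
Definition seriesN (f : S) : S := WSeries (wellordered_suppN (@scoef_wo f)).
Definition series1 : S := WSeries wellordered_supp1.
Definition seriesM (f g : S) : S :=
  WSeries (wellordered_conv HL (@scoef_wo f) (@scoef_wo g)).

Lemma seriesDA : associative seriesD.
Proof. by move=> f g h; apply: series_eq; apply: funext => x /=; rewrite addrA. Qed.
Lemma seriesDC : commutative seriesD.
Proof. by move=> f g; apply: series_eq; apply: funext => x /=; rewrite addrC. Qed.
Lemma series0D : left_id series0 seriesD.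
Proof. by move=> f; apply: series_eq; apply: funext => x /=; rewrite add0r. Qed.
Lemma seriesND : left_inverse series0 seriesN seriesD.
Proof. by move=> f; apply: series_eq; apply: funext => x /=; rewrite addNr. Qed.
HB.instance Definition _ := GRing.isZmodule.Build S seriesDA seriesDC series0D seriesND.

Lemma seriesMA : associative seriesM.
Proof.
by move=> f g h; apply: series_eq; rewrite /= (convA HL (@scoef_wo f) (@scoef_wo g) (@scoef_wo h)).
Qed.
Lemma seriesMC : commutative seriesM.
Proof. by move=> f g; apply: series_eq; apply: convC. Qed.
Lemma series1M : left_id series1 seriesM.
Proof. by move=> f; apply: series_eq; apply: conv_oneser. Qed.
Lemma seriesMDl : left_distributive seriesM seriesD.
Proof.
by move=> f g h; apply: series_eq; rewrite /= (convDl HL (@scoef_wo f) (@scoef_wo g) (@scoef_wo h)).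
Qed.
Lemma series1_neq0 : series1 != series0.
Proof.
apply/eqP => /(congr1 (fun f => scoef f 0)) /=; rewrite /oneser eqxx.
by apply/eqP; rewrite oner_eq0.
Qed.
HB.instance Definition _ :=
  GRing.Zmodule_isComNzRing.Build S seriesMA seriesMC series1M seriesMDl series1_neq0.

Lemma scoefB (f g : S) x : scoef (f - g) x = scoef f x - scoef g x. Proof. by []. Qed.
Lemma scoef1 : scoef (1 : S) = @oneser T K. Proof. by []. Qed.
Lemma scoefM (f g : S) : scoef (f * g) = conv (scoef f) (scoef g). Proof. by []. Qed.

End SeriesRing.

Section SeriesField.
Variables (T : zmodType) (L : rel T) (K : fieldType) (HL : ordered_zmod L).
Local Notation wo := (wellordered L).
Local Notation S := (@series T L K HL).

Lemma wellordered_monomial (c : K) (g : T) : wo (supp (fun x => if x == g then c else 0)).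
Proof.
apply: (wellordered_sub (@wellordered_set1 _ _ HL g)) => x; rewrite /supp.
by case: (x =P g) => //= _; rewrite eqxx.
Qed.

Definition monomial (c : K) (g : T) : S := WSeries (@wellordered_monomial c g).

Lemma scoef_monomialM c g (w : S) x : scoef (monomial c g * w) x = c * scoef w (x - g).
Proof.
rewrite scoefM /conv (fsum_seq (s := [:: g])) // => [|h]; first by rewrite big_seq1 /= eqxx.
by rewrite inE /=; case: (h =P g) => //= _; rewrite mul0r eqxx.
Qed.

Lemma monomialM c c' g g' : monomial c g * monomial c' g' = monomial (c * c') (g + g').
Proof.
apply: series_eq; apply: funext => x; rewrite scoef_monomialM /= subr_eq [g' + g]addrC.
by case: (x == g + g'); rewrite ?mulr0.
Qed.

Lemma monomial1 : monomial 1 0 = 1.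
Proof. exact: series_eq. Qed.

Section GeometricSeries.
Variable U : S.
Hypothesis U_gt0 : forall x, scoef U x != 0 -> strict L 0 x.
Let A := supp (scoef U).
Let woA : wo A := @scoef_wo _ _ _ U.

Lemma scoef_expr_supp m x : scoef (U ^+ m) x != 0 -> nsum A m x.
Proof.
elim: m x => [|m IH] x; first by rewrite expr0 scoef1 /oneser; case: (x =P 0); rewrite ?eqxx.
by rewrite exprS scoefM => /conv_supp [a Aa [y /IH my <-]]; exists a => //; exists y.
Qed.

Let N x := xget 0%N [set N | forall m, nsum A m x -> (m < N)%N].
Let NP x m : nsum A m x -> (m < N x)%N.
Proof. exact: xgetPex (nsum_bounded HL U_gt0 woA x) _. Qed.

(* truncating at N x loses nothing: U ^+ m vanishes at x for m >= N x *)
Definition geometric_coef x := \sum_(m < N x) scoef (U ^+ m) x.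

Lemma geometric_coefE x M : (N x <= M)%N -> \sum_(m < M) scoef (U ^+ m) x = geometric_coef x.
Proof.
move=> NM; rewrite /geometric_coef (big_ord_widen _ (fun m => scoef (U ^+ m) x) NM).
rewrite [RHS]big_mkcond /=; apply: eq_bigr => m _; case: ifP => // /negbT.
rewrite -leqNgt => Nm; apply/eqP; apply: contraLR Nm => /scoef_expr_supp /NP.
by rewrite -ltnNge.
Qed.

Lemma geometric_coef_supp x : geometric_coef x != 0 -> monoid_gen A x.
Proof.
move=> /eqP nz; apply: contrapT => ngen; apply: nz; apply: big1 => m _.
by apply/eqP; apply: contra_notT ngen => /scoef_expr_supp; exists m.
Qed.

Definition geometric : S :=
  WSeries (wellordered_sub (wellordered_monoid_gen HL U_gt0 woA) geometric_coef_supp).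

Lemma conv_geometric x : conv (scoef U) geometric_coef x = geometric_coef x - @oneser T K x.
Proof.
have [s [us covs]] := antidiagonal_finite HL x woA (wellordered_monoid_gen HL U_gt0 woA).
pose M := maxn (N x) (\max_(h <- s) N (x - h)).
rewrite /conv (fsum_seq us) => [|h]; last first.
  by rewrite mulf_eq0 negb_or => /andP [Uh /geometric_coef_supp gh]; apply: covs.
transitivity (\sum_(h <- s) \sum_(m < M) scoef U h * scoef (U ^+ m) (x - h)).
  apply: eq_big_seq => h hs; rewrite -mulr_sumr geometric_coefE //.
  exact: leq_trans (leq_bigmax_seq _ hs isT) (leq_maxr _ _).
rewrite exchange_big /=.
transitivity (\sum_(m < M) scoef (U ^+ m.+1) x).
  apply: eq_bigr => m _; rewrite exprS scoefM /conv (fsum_seq us) // => h.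
  rewrite mulf_eq0 negb_or => /andP [Uh /scoef_expr_supp mh].
  by apply: covs; split => //; exists m.
rewrite -(@geometric_coefE x M.+1) ?big_ord_recl ?expr0 ?scoef1.
  by rewrite [@oneser T K x + _]addrC addrK.
exact: leq_trans (leq_maxl _ _) (leqnSn _).
Qed.

Lemma mul_geometric : (1 - U) * geometric = 1.
Proof.
apply: series_eq; apply: funext => x.
by rewrite mulrBl mul1r scoefB scoefM /= conv_geometric subKr.
Qed.

End GeometricSeries.

Implicit Types f : S.

Definition tail_coef f g0 y := if y == 0 then 0 else - scoef f (y + g0) / scoef f g0.

Lemma wellordered_tail f g0 : wo (supp (tail_coef f g0)).
Proof.
apply: (wellordered_sub (wellordered_shift HL (c := g0) (@scoef_wo _ _ _ f))) => y.
rewrite /supp /tail_coef; case: (y =P 0) => [_|_]; first by rewrite eqxx.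
by rewrite mulf_eq0 negb_or oppr_eq0 => /andP [].
Qed.

Definition tail f g0 : S := WSeries (@wellordered_tail f g0).

Lemma tail_supp f g0 y : scoef (tail f g0) y != 0 -> y != 0 /\ scoef f (y + g0) != 0.
Proof.
rewrite /= /tail_coef; case: (y =P 0) => [_|/eqP y0]; first by rewrite eqxx.
by rewrite mulf_eq0 negb_or oppr_eq0 => /andP [].
Qed.

Lemma monomial_tail f g0 : scoef f g0 != 0 -> f = monomial (scoef f g0) g0 * (1 - tail f g0).
Proof.
move=> fg0; apply: series_eq; apply: funext => x.
rewrite scoef_monomialM scoefB scoef1 /oneser /= /tail_coef subr_eq0.
case: (x =P g0) => [->|/eqP xg0]; first by rewrite subr0 mulr1.
by rewrite subrK sub0r mulNr opprK mulrC divfK.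
Qed.

Lemma inverse_monomial_tail f g0 : scoef f g0 != 0 ->
    (forall x, scoef f x != 0 -> L g0 x) ->
  exists2 V : S, f * (monomial (scoef f g0)^-1 (- g0) * V) = 1 &
    forall x, scoef V x != 0 -> monoid_gen [set y | y != 0 /\ scoef f (y + g0) != 0] x.
Proof.
move=> fg0 g0_min.
have tail_gt0 y : scoef (tail f g0) y != 0 -> strict L 0 y.
  move=> /tail_supp [y0 /g0_min]; rewrite -{1}(add0r g0) oz_leD2r //.
  by case/(oz_le_eqVlt HL) => // e; rewrite e eqxx in y0.
exists (geometric tail_gt0) => [|x /geometric_coef_supp].
  rewrite {1}(monomial_tail fg0) mulrACA monomialM mul_geometric mulr1.
  by rewrite divff // subrr monomial1.
by apply: monoid_gen_sub => y /tail_supp.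
Qed.

Lemma series_unit (f : S) : f != 0 -> exists g, f * g = 1.
Proof.
move=> f0; have [x fx] : exists x, scoef f x != 0.
  apply: contrapT => nf; move/eqP: f0; apply; apply: series_eq; apply: funext => x.
  by apply/eqP; apply: contrapT => /negP fx; apply: nf; exists x.
have [g0 [fg0 g0_min]] := @scoef_wo _ _ _ f (supp (scoef f)) (fun _ h => h) (ex_intro _ x fx).
by have [V fV _] := inverse_monomial_tail fg0 g0_min; eexists; apply: fV.
Qed.

Definition series_inv (f : S) : S := if f == 0 then 0 else xget 0 [set g | f * g = 1].

Lemma series_mulVf (f : S) : f != 0 -> series_inv f * f = 1.
Proof.
move=> f0; rewrite /series_inv (negbTE f0) mulrC.
exact: xgetPex (series_unit f0).
Qed.

Lemma series_inv0 : series_inv 0 = 0.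
Proof. by rewrite /series_inv eqxx. Qed.

HB.instance Definition _ := GRing.ComNzRing_isField.Build S series_mulVf series_inv0.

End SeriesField.

(** * Substituting x-monomials *)

Lemma tot_ord_group_ordered (G : zmodType) (n : nat) (le : rel (G * 'rV[int]_n)) :
  tot_ord_group le -> ordered_zmod le.
Proof. by case=> anti tr tot add; split => // x y z; apply: add. Qed.

Lemma tot_ord_group_leG (G : zmodType) (n : nat) (le : rel (G * 'rV[int]_n)) :
  tot_ord_group le -> ordered_zmod (leG le).
Proof.
case=> anti tr tot add; split => [x y lxy lyx|x y z|x y|x y z].
- by have [] := anti _ _ lxy lyx.
- exact: tr.
- exact: tot.
- by move/(add _ _ (z, 0)); rewrite /leG /= addr0.
Qed.

Lemma mulmx_det_inj (n : nat) (B : 'M[int]_n) (k k' : 'rV[int]_n) :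
  \det B != 0 -> k *m B = k' *m B -> k = k'.
Proof.
move=> detB kB; apply/eqP; rewrite -subr_eq0.
have : (k - k') *m B *m \adj B = 0 by rewrite mulmxBl kB subrr mul0mx.
by rewrite -mulmxA mul_mx_adj mul_mx_scalar => /eqP; rewrite scalemx_eq0 (negbTE detB).
Qed.

Lemma shift_invariant_const (U : Type) (n : nat) (F : 'rV[int]_n -> U) :
  (forall k i, F (k + evec i) = F k) -> forall k, F k = F 0.
Proof.
move=> FS k.
have FN k' i : F (k' - evec i) = F k' by rewrite -[in RHS](subrK (evec i) k') FS.
have FZ k' i (c : int) : F (k' + c *: evec i) = F k'.
  have scaleS (m : nat) : m.+1%:Z *: evec i = m%:Z *: evec i + evec i.
    by rewrite intS scalerDl scale1r addrC.
  case: c => m; elim: m => [|m IH]; first by rewrite scale0r addr0.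
  - by rewrite scaleS addrA FS.
  - by rewrite NegzE scaleNr scale1r FN.
  by rewrite !NegzE !scaleNr scaleS opprD addrA FN -scaleNr -NegzE.
rewrite (row_sum_delta k); elim/big_rec: _ => // i k' _ IH.
by rewrite addrC FZ.
Qed.

Section MonomialSubstitution.
Variables (K : fieldType) (G : zmodType) (n : nat) (le : rel (G * 'rV[int]_n))
  (a : 'I_n -> G -> K) (gmin : 'I_n -> G).
Hypotheses (Hle : tot_ord_group le)
  (a_wo : forall i, wellordered (leG le) (supp (a i)))
  (a_min : forall i, a i (gmin i) != 0 /\ forall g, a i g != 0 -> leG le (gmin i) g).

Let HLG := tot_ord_group_leG Hle.
Local Notation S := (series K HLG).

Definition aseries (i : 'I_n) : S := WSeries (@a_wo i).

Lemma aseries_neq0 i : aseries i != 0.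
Proof.
apply/eqP => /(congr1 (fun f => scoef f (gmin i))) /= ai0.
by move: (a_min i).1; rewrite ai0 eqxx.
Qed.

Definition apow (k : 'rV[int]_n) : S := \prod_(i < n) aseries i ^ k 0 i.

Lemma apow0 : apow 0 = 1.
Proof. by rewrite /apow big1 // => i _; rewrite mxE expr0z. Qed.

Lemma apowS k i : apow (k + evec i) = apow k * aseries i.
Proof.
rewrite /apow (bigD1 i) //= [in RHS](bigD1 i) //= mulrAC; congr (_ * _).
  by rewrite !mxE !eqxx exprzDr ?unitfE ?aseries_neq0 // expr1z.
by apply: eq_bigr => j ji; rewrite !mxE (negbTE ji) andbF addr0.
Qed.

Lemma apow_neq0 k : apow k != 0.
Proof. by apply/prodf_neq0 => i _; rewrite expfz_neq0 ?aseries_neq0. Qed.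

Lemma powfam_apow : powfam le a (fun k => scoef (apow k)).
Proof.
split => [|k i|k]; first by rewrite apow0.
- by rewrite apowS scoefM; apply/(mulser_conv HLG) => //; apply: scoef_wo.
- exact: scoef_wo.
Qed.

Lemma powfam_unique P : powfam le a P -> forall k, P k = scoef (apow k).
Proof.
case=> P0 PS P_wo; pose Q k : S := WSeries (@P_wo k).
have QS k i : Q (k + evec i) = Q k * aseries i.
  by apply: series_eq => /=; apply/(mulser_conv HLG _ (@P_wo k) (@a_wo i)).
suff Qk k : Q k / apow k = 1.
  by move=> k; rewrite -[apow k]mul1r -(Qk k) divfK ?apow_neq0.
rewrite (shift_invariant_const (F := fun k => Q k / apow k)) => [|{}k i].
  by rewrite apow0 divr1; apply: series_eq; rewrite /= P0.
by rewrite QS apowS invfM mulrACA divff ?aseries_neq0 ?mulr1.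
Qed.

Definition tail_support : set G := [set y | y != 0 /\ exists i, a i (gmin i + y) != 0].

Lemma wellordered_tail_support : wellordered (leG le) tail_support.
Proof.
have woI (s : seq 'I_n) :
    wellordered (leG le) [set y | exists2 i, i \in s & a i (gmin i + y) != 0].
  elim: s => [|i s IH]; first by move=> C C0 [x /C0 []].
  apply: (wellordered_sub (wellorderedU HLG (wellordered_shift HLG (c := gmin i) (@a_wo i)) IH)).
  move=> y [j]; rewrite inE => /orP [/eqP ->|js] ajy; first by left; rewrite /= addrC.
  by right; exists j.
by apply: (wellordered_sub (woI (enum 'I_n))) => y [_ [i ai]]; exists i; rewrite ?mem_enum.
Qed.

Lemma tail_support_gt0 y : tail_support y -> strict (leG le) 0 y.
Proof.
move=> [y0 [i /(a_min i).2]]; rewrite -{1}(addr0 (gmin i)) (oz_leD2l HLG).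
by case/(oz_le_eqVlt HLG) => // e; rewrite -e eqxx in y0.
Qed.

Definition in_cone (d : G) (f : S) :=
  forall x, scoef f x != 0 -> exists2 m, monoid_gen tail_support m & x = d + m.

Lemma in_cone1 : in_cone 0 1.
Proof.
move=> x; rewrite scoef1 /oneser; case: (x =P 0) => [->|_]; last by rewrite eqxx.
by exists 0; [exists 0%N|rewrite addr0].
Qed.

Lemma in_coneM d d' f g : in_cone d f -> in_cone d' g -> in_cone (d + d') (f * g).
Proof.
move=> cf cg x; rewrite scoefM => /conv_supp [y /cf [m gm ->] [z /cg [m' gm' ->] <-]].
by exists (m + m'); [exact: monoid_genD|rewrite addrACA].
Qed.

Lemma in_coneX d f m : in_cone d f -> in_cone (d *+ m) (f ^+ m).
Proof.
move=> cf; elim: m => [|m IH]; first by rewrite expr0 mulr0n; exact: in_cone1.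
by rewrite exprS mulrS; exact: in_coneM.
Qed.

Lemma in_cone_expz d f (m : int) :
  in_cone d f -> in_cone (- d) f^-1 -> in_cone (d *~ m) (f ^ m).
Proof.
case: m => m cf cfV; first exact: in_coneX.
by rewrite NegzE mulrNz -exprz_inv -mulNrn; exact: in_coneX.
Qed.

Lemma in_cone_aseries i : in_cone (gmin i) (aseries i).
Proof.
move=> x ax; exists (x - gmin i); last by rewrite addrC subrK.
case: (x - gmin i =P 0) => [->|/eqP nz]; first by exists 0%N.
exists 1%N; exists (x - gmin i); last by exists 0; rewrite ?addr0.
by split => //; exists i; rewrite addrC subrK.
Qed.

Lemma in_cone_aseriesV i : in_cone (- gmin i) (aseries i)^-1.
Proof.
have [V aV V_gen] := inverse_monomial_tail (f := aseries i) (a_min i).1 (a_min i).2.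
have -> : (aseries i)^-1 = monomial HLG (a i (gmin i))^-1 (- gmin i) * V.
  by rewrite -[LHS]mulr1 -aV mulKf ?aseries_neq0.
move=> x; rewrite scoef_monomialM mulf_eq0 negb_or => /andP [_ /V_gen gen].
exists (x - - gmin i); last by rewrite addrC subrK.
by apply: monoid_gen_sub gen => y [y0 ay]; split => //; exists i; rewrite addrC.
Qed.

Lemma in_cone_apow (k : 'rV[int]_n) : in_cone (\sum_(i < n) gmin i *~ k 0 i) (apow k).
Proof.
rewrite /apow; elim/big_rec2: _ => [|i d f _ cf]; first exact: in_cone1.
exact: in_coneM (in_cone_expz (m := k 0 i) (@in_cone_aseries i) (@in_cone_aseriesV i)) cf.
Qed.

Variables (B : 'M[int]_n) (phi : G * 'rV[int]_n -> K).
Hypotheses (detB : \det B != 0) (phi_wo : wellordered (lef le gmin B) (supp phi)).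

Let HLT := tot_ord_group_ordered Hle.

Lemma fendoE g k : fendo gmin B (g, k) = (g, 0) + (\sum_(i < n) gmin i *~ k 0 i, k *m B).
Proof.
have -> : (g, 0) + (\sum_(i < n) gmin i *~ k 0 i, k *m B) =
  (g + \sum_(i < n) gmin i *~ k 0 i, 0 + k *m B) by [].
by rewrite add0r.
Qed.

Lemma wellordered_phi_coef k : wellordered (leG le) (supp (fun g => phi (g, k))).
Proof.
move=> C Cphi [g Cg].
have [[g0 k0] [[/= -> Cg0] ming0]] := @phi_wo [set p | p.2 = k /\ C p.1]
  (fun '(g, k') '(conj e Cg) => eq_ind_r (fun k' => supp phi (g, k')) (Cphi g Cg) e)
  (ex_intro _ (g, k) (conj erefl Cg)).
exists g0; split => // h Ch; have := ming0 (h, k) (conj erefl Ch).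
by rewrite /lef !fendoE (oz_leD2r HLT).
Qed.

Lemma substitution_constant_term P : powfam le a P ->
  exists (C : 'rV[int]_n -> G -> K) (S : G * 'rV[int]_n -> K),
    [/\ (forall k, mulser (fun g => phi (g, k)) (P k) (C k)), sums (term B C) S,
        wellordered le (supp S) & forall g, S (g, 0) = phi (g, 0)].
Proof.
move=> /powfam_unique P_apow.
pose C k := conv (fun g => phi (g, k)) (scoef (apow k)).
pose kinv y := xget 0 [set k : 'rV[int]_n | k *m B = y].
have kinvP y k : k *m B = y -> kinv y = k.
  move=> kB; apply: (mulmx_det_inj detB); rewrite kB.
  by apply: (xgetPex 0 (P := [set k | k *m B = y])); exists k.
(* B is injective, so the x-exponent x.2 comes from at most one k *)
pose S (x : G * 'rV[int]_n) := if kinv x.2 *m B == x.2 then C (kinv x.2) x.1 else 0.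
exists C, S; split.
- move=> k; rewrite P_apow; apply/(mulser_conv HLG _ (@wellordered_phi_coef k)) => //.
  exact: scoef_wo.
- move=> t; exists [:: kinv t.2]; split => // [k|]; last by rewrite big_seq1 /S /term eq_sym.
  rewrite /term; case: (t.2 =P k *m B) => [tk _|_]; last by rewrite eqxx.
  by rewrite (kinvP _ _ (esym tk)) mem_seq1.
- pose X2 := (fun m => (m, 0 : 'rV[int]_n)) @` monoid_gen tail_support.
  have woX2 : wellordered le X2.
    exact: wellordered_image
      (wellordered_monoid_gen HLG tail_support_gt0 wellordered_tail_support).
  apply: (wellordered_sub (wellordered_sumset HLT (wellordered_image phi_wo) woX2)).
  move=> [g y]; rewrite /supp /S /=; case: (kinv y *m B =P y) => [kB|_]; last by rewrite eqxx.
  move=> /conv_supp [h phi_h [w /in_cone_apow [m gen_m ->] <-]].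
  exists (fendo gmin B (h, kinv y)); first by exists (h, kinv y).
  exists (m, 0); first by exists m.
  rewrite fendoE; apply: injective_projections => /=; first by rewrite addrA.
  by rewrite kB add0r addr0.
- move=> g; rewrite /S /= (kinvP 0 0 (mul0mx _ _)) mul0mx eqxx /C apow0.
  by rewrite convC scoef1 conv_oneser.
Qed.

End MonomialSubstitution.

Theorem mainTheorem12 (K : fieldType) (G : zmodType) (n : nat)
  (le : rel (G * 'rV[int]_n)) (a : 'I_n -> G -> K) (B : 'M[int]_n)
  (gmin : 'I_n -> G) (phi : G * 'rV[int]_n -> K) :
  tot_ord_group le ->
  (* a_i in K_w[G], nonzero, with initial exponent g_i = gmin i *)
  (forall i, wellordered (leG le) (supp (a i))) ->
  (forall i, exists g, a i g != 0) ->
  (forall i, a i (gmin i) != 0 /\ forall g, a i g != 0 -> leG le (gmin i) g) ->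
  \det B != 0 ->
  (* Phi in K_w^f[G ⊕ H] *)
  wellordered (lef le gmin B) (supp phi) ->
  (exists P, powfam le a P) /\
  (forall P, powfam le a P ->
     exists (C : 'rV[int]_n -> G -> K) (S : G * 'rV[int]_n -> K),
       [/\ (forall k, mulser (fun g => phi (g, k)) (P k) (C k)),
           (* Phi(f_1,...,f_n) = sum_k phi_k f^k exists in K_w[G ⊕ H] ... *)
           sums (term B C) S,
           wellordered le (supp S)
           (* ... and CT_x Phi(f_1,...,f_n) = phi_0 *)
         & forall g, S (g, 0) = phi (g, 0)]).
Proof.
(* the nonvanishing hypothesis on the a_i follows from the next one *)
move=> Hle a_wo _ a_min detB phi_wo; split.
  by eexists; exact: powfam_apow Hle a_wo a_min.
by move=> P; exact: substitution_constant_term.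
Qed.
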